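(* Let $n\ge 3$ and consider the Markov chain on $\{0,1,\dots,n-1\}$ with $n\times n$ transition probability matrix $\mathbf P=(P_{ij})$ given by: $P_{00}=5/6$, $P_{01}=1/6$; $P_{10}=5/6$, $P_{12}=1/6$; for $2\le i\le n-2$: $P_{i0}=2/3$, $P_{i,i-1}=1/6$, $P_{i,i+1}=1/6$; $P_{n-1,0}=1/3$, $P_{n-1,n-2}=1/6$, $P_{n-1,n-1}=1/2$; all other entries $0$. Then the steady state probability vector $\vec\pi=(\pi_0,\dots,\pi_{n-1})$ (the unique probability vector with $\vec\pi=\vec\pi\mathbf P$) is given by $$\pi_i=\frac{C_{n-1-i}}{\sum_{l=0}^{n-1}C_l},\qquad i=0,1,\dots,n-1.$$
   Context: The Lucas-balancing numbers $C_m$ are defined by $C_0=1$, $C_1=3$, $C_{m+1}=6C_m-C_{m-1}$ (equivalently $C_m=\sqrt{8B_m^2+1}$ where $B_m$ are the balancing numbers $B_0=0,B_1=1,B_{m+1}=6B_m-B_{m-1}$). *)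

From mathcomp Require Import all_boot all_order all_algebra.
Set Implicit Arguments. Unset Strict Implicit. Unset Printing Implicit Defensive.
Import Order.TTheory GRing.Theory Num.Theory.
Local Open Scope ring_scope.

Fixpoint lucas_bal (m : nat) : int :=
  match m with
  | 0%N => 1
  | S p => match p with
           | 0%N => 3
           | S q => 6 * lucas_bal p - lucas_bal q
           end
  end.

Definition Pentry (R : realFieldType) (n i j : nat) : R :=
  if (i == 0)%N then
    (if (j == 0)%N then 5%:R / 6%:R else if (j == 1)%N then 1 / 6%:R else 0)
  else if (i == 1)%N then
    (if (j == 0)%N then 5%:R / 6%:R else if (j == 2)%N then 1 / 6%:R else 0)
  else if (i == n.-1)%N then
    (if (j == 0)%N then 1 / 3%:R
     else if (j == n.-2)%N then 1 / 6%:R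
     else if (j == n.-1)%N then 1 / 2%:R else 0)
  else
    (if (j == 0)%N then 2%:R / 3%:R
     else if (j == i.-1)%N then 1 / 6%:R
     else if (j == i.+1)%N then 1 / 6%:R else 0).

Definition Pmat (R : realFieldType) (n : nat) : 'M[R]_n :=
  \matrix_(i < n, j < n) Pentry R n i j.

Definition prob_vec (R : realFieldType) (n : nat) (q : 'rV[R]_n) : Prop :=
  (forall i, 0 <= q 0 i) /\ \sum_(i < n) q 0 i = 1.

Definition pi_formula (R : realFieldType) (n : nat) : 'rV[R]_n :=
  \row_(i < n) ((lucas_bal (n.-1 - i))%:~R / (\sum_(l < n) (lucas_bal l)%:~R)).

From mathcomp Require Import all_boot all_order all_algebra.
From mathcomp Require Import zify ring lra.
Import Order.TTheory GRing.Theory Num.Theory.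
Local Open Scope ring_scope.

(* Read backwards from the last state, the balance equations of columns
   n-1, n-2, ..., 1 of pi = pi P say pi_(n-2) = 3 pi_(n-1) and
   pi_(j-1) = 6 pi_j - pi_(j+1): this is the Lucas-balancing recurrence, so a
   stationary vector is a multiple of (C_(n-1-i))_i.  Conversely that vector
   satisfies these equations, and the equation of column 0 is then automatic
   because P is stochastic.  Normalising fixes the multiple. *)

Section StochasticMatrix.
Variables (R : pzRingType) (n : nat) (P : 'M[R]_n).
Hypothesis P_row_sum1 : forall i, \sum_j P i j = 1.

Lemma sum_mulmx_stochastic (q : 'rV[R]_n) : \sum_j (q *m P) 0 j = \sum_j q 0 j.
Proof.
under eq_bigr do rewrite mxE.
rewrite exchange_big; apply: eq_bigr => i _.
by rewrite -mulr_sumr P_row_sum1 mulr1.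
Qed.

(* Both sides of [q *m P = q] have the same total mass, so any single column
   equation follows from the others. *)
Lemma stationary_col_of_others (q : 'rV[R]_n) (j0 : 'I_n) :
  (forall j, j != j0 -> (q *m P) 0 j = q 0 j) -> (q *m P) 0 j0 = q 0 j0.
Proof.
move=> eq_other; have := sum_mulmx_stochastic q.
rewrite (bigD1 j0) //= [in RHS](bigD1 j0) //= (eq_bigr _ (fun j => eq_other j)).
exact: addIr.
Qed.

End StochasticMatrix.

Lemma lucas_bal_rec m : lucas_bal m.+2 = 6 * lucas_bal m.+1 - lucas_bal m.
Proof. by []. Qed.

Lemma lucas_bal_gt0 m : 0 < lucas_bal m.
Proof.
suff /andP[] : (1 <= lucas_bal m <= lucas_bal m.+1)%R by lia.
by elim: m => [|m /andP[C1 C12]] //; rewrite lucas_bal_rec; apply/andP; split; lia.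
Qed.

Lemma sum_lucas_bal_rev (R : pzRingType) n :
  \sum_(i < n.+1) (lucas_bal (n - i))%:~R = \sum_(l < n.+1) (lucas_bal l)%:~R :> R.
Proof.
rewrite (reindex_inj rev_ord_inj); apply: eq_bigr => i _.
by rewrite /= subSS subKn // -ltnS.
Qed.

Lemma lucas_bal_scaled {R : comPzRingType} {g : nat -> R} {N : nat} :
  g 1%N = 3 * g 0%N ->
  (forall k, (k.+2 <= N)%N -> g k.+2 = 6 * g k.+1 - g k) ->
  forall k, (k <= N)%N -> g k = g 0%N * (lucas_bal k)%:~R.
Proof.
move=> g1 g_rec.
have two_steps k : (k.+1 <= maxn 1 N)%N ->
    g k = g 0%N * (lucas_bal k)%:~R /\ g k.+1 = g 0%N * (lucas_bal k.+1)%:~R.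
  elim: k => [_|k IH k_lt]; first by split; [rewrite mulr1 | rewrite g1 mulrC].
  have [gk gk1] := IH (ltnW k_lt); split=> //.
  rewrite g_rec; last by move: k_lt; rewrite leq_max; lia.
  by rewrite gk gk1 lucas_bal_rec intrB intrM; ring.
case=> [_|k le_kN]; first by rewrite /= mulr1.
by have [] := two_steps k ltac:(rewrite leq_max; lia).
Qed.

Lemma sum_ord_support3 (V : nmodType) n (F : 'I_n.+1 -> V) (a b c : nat) :
  (a <= n)%N -> (b <= n)%N -> (c <= n)%N -> a <> b -> a <> c -> b <> c ->
  (forall i : 'I_n.+1, (i : nat) <> a -> (i : nat) <> b -> (i : nat) <> c -> F i = 0) ->
  \sum_i F i = F (inord a) + F (inord b) + F (inord c).
Proof.
move=> ha hb hc ab ac bc F_supp.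
rewrite (bigD1 (inord a)) //= (bigD1 (inord b)) /=; last first.
  by rewrite -val_eqE /= !inordK //; lia.
rewrite (bigD1 (inord c)) /=; last first.
  by rewrite -!val_eqE /= !inordK //; lia.
rewrite big1 ?addr0 ?addrA // => i; rewrite -!val_eqE /= !inordK // => hi.
apply: F_supp; lia.
Qed.

Ltac Pentry_cases := rewrite /Pentry /=; repeat case: eqP => ? /=; try (exfalso; lia).

Section TransitionMatrix.
Variables (R : realFieldType) (n : nat).
Hypothesis n_ge2 : (2 <= n)%N.

Local Notation P := (Pmat R n.+1).

Lemma Pmat_row_sum1 i : \sum_j P i j = 1.
Proof.
under eq_bigr do rewrite mxE.
have i_le : (i <= n)%N by rewrite -ltnS.
have support3 a b c : (a <= n)%N -> (b <= n)%N -> (c <= n)%N ->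
    a <> b -> a <> c -> b <> c ->
    (forall j : nat, j <> a -> j <> b -> j <> c -> Pentry R n.+1 i j = 0) ->
    Pentry R n.+1 i a + Pentry R n.+1 i b + Pentry R n.+1 i c = 1 ->
    \sum_(j < n.+1) Pentry R n.+1 i j = 1.
  move=> ha hb hc ab ac bc supp <-.
  by rewrite (@sum_ord_support3 _ _ _ a b c) ?inordK // => j; apply: supp.
case: (nat_of_ord i =P 0%N) => [i0 | i0].
  by apply: (support3 0 1 2)%N; try lia; [move=> j *; Pentry_cases | Pentry_cases; field].
case: (nat_of_ord i =P 1%N) => [i1 | i1].
  by apply: (support3 0 2 1)%N; try lia; [move=> j *; Pentry_cases | Pentry_cases; field].
case: (nat_of_ord i =P n) => [iN | iN].
  by apply: (support3 0 n.-1 n)%N; try lia; [move=> j *; Pentry_cases | Pentry_cases; field].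
by apply: (support3 0 i.-1 i.+1)%N; try lia; [move=> j *; Pentry_cases | Pentry_cases; field].
Qed.

Lemma Pmat_col_mid (q : 'rV[R]_n.+1) j : (1 <= j < n)%N ->
  (q *m P) 0 (inord j) = (q 0 (inord j.-1) + q 0 (inord j.+1)) / 6.
Proof.
move=> /andP[j_ge1 j_lt]; rewrite mxE.
have j_le : (j < n.+1)%N by lia.
under eq_bigr do rewrite mxE (inordK j_le).
rewrite (@sum_ord_support3 _ _ _ j.-1 j.+1 j) ?inordK; try lia; last first.
  by move=> i *; have i_lt := ltn_ord i; Pentry_cases; rewrite mulr0.
have -> : Pentry R n.+1 j j = 0 by Pentry_cases.
have -> : Pentry R n.+1 j.-1 j = 1 / 6 by Pentry_cases.
have -> : Pentry R n.+1 j.+1 j = 1 / 6 by Pentry_cases.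
by rewrite mulr0 addr0 mulrDl !mul1r.
Qed.

Lemma Pmat_col_last (q : 'rV[R]_n.+1) :
  (q *m P) 0 (inord n) = q 0 (inord n.-1) / 6 + q 0 (inord n) / 2.
Proof.
rewrite mxE.
under eq_bigr do rewrite mxE (inordK (ltnSn n)).
rewrite (@sum_ord_support3 _ _ _ n.-1 n 0) ?inordK; try lia; last first.
  by move=> i *; have i_lt := ltn_ord i; Pentry_cases; rewrite mulr0.
have -> : Pentry R n.+1 0%N n = 0 by Pentry_cases.
have -> : Pentry R n.+1 n.-1 n = 1 / 6 by Pentry_cases.
have -> : Pentry R n.+1 n n = 1 / 2 by Pentry_cases.
by rewrite mulr0 addr0 !mul1r.
Qed.

Definition lucas_row : 'rV[R]_n.+1 := \row_(i < n.+1) (lucas_bal (n - i))%:~R.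

Lemma lucas_row_gt0 i : 0 < lucas_row 0 i.
Proof. by rewrite mxE ltr0z lucas_bal_gt0. Qed.

Lemma sum_lucas_row : \sum_i lucas_row 0 i = \sum_(l < n.+1) (lucas_bal l)%:~R.
Proof. by under eq_bigr do rewrite mxE; exact: sum_lucas_bal_rev. Qed.

Lemma lucas_row_inord k : (k <= n)%N -> lucas_row 0 (inord k) = (lucas_bal (n - k))%:~R.
Proof. by move=> k_le; rewrite mxE inordK. Qed.

Lemma lucas_row_stationary : lucas_row *m P = lucas_row.
Proof.
have col k : (1 <= k <= n)%N -> (lucas_row *m P) 0 (inord k) = lucas_row 0 (inord k).
  case/andP=> k_ge1; rewrite leq_eqVlt => /orP[/eqP-> | k_lt].
    rewrite Pmat_col_last !lucas_row_inord ?leq_pred // subnn.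
    rewrite (_ : n - n.-1 = 1)%N; last lia.
    have -> : (lucas_bal 1)%:~R = 3 :> R by [].
    have -> : (lucas_bal 0)%:~R = 1 :> R by [].
    by field.
  rewrite Pmat_col_mid ?lucas_row_inord //; try lia.
  have -> : (n - k.-1 = (n - k.+1).+2)%N by lia.
  have -> : (n - k = (n - k.+1).+1)%N by lia.
  by rewrite lucas_bal_rec intrB intrM; field.
apply/rowP => j; case: (eqVneq j ord0) => [-> | j_ne0]; last first.
  by rewrite -[j]inord_val; apply: col; move: j_ne0 (ltn_ord j); rewrite -val_eqE /=; lia.
apply: (@stationary_col_of_others _ _ P Pmat_row_sum1) => i i_ne0.
rewrite -[i]inord_val; apply: col; move: i_ne0 (ltn_ord i); rewrite -val_eqE /=; lia.
Qed.

Lemma stationary_Pmat_scaled (q : 'rV[R]_n.+1) :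
  q *m P = q -> q = q 0 ord_max *: lucas_row.
Proof.
move=> q_stat; pose g k := q 0 (inord (n - k)).
have g1 : g 1%N = 3 * g 0%N.
  have := Pmat_col_last q; rewrite q_stat /g subn0 (_ : n - 1 = n.-1)%N; last lia.
  move=> E; lra.
have g_rec k : (k.+2 <= n)%N -> g k.+2 = 6 * g k.+1 - g k.
  move=> k_lt; have := Pmat_col_mid q (n - k.+1) ltac:(lia); rewrite q_stat.
  have -> : ((n - k.+1).-1 = n - k.+2)%N by lia.
  have -> : ((n - k.+1).+1 = n - k)%N by lia.
  rewrite /g => E; lra.
have ord_maxE : ord_max = inord n :> 'I_n.+1 by apply: val_inj; rewrite /= inordK.
apply/rowP => i; rewrite !mxE ord_maxE.
have := lucas_bal_scaled g1 g_rec _ (leq_subr i n).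
by rewrite /g subn0 subKn ?inord_val // -ltnS.
Qed.

End TransitionMatrix.

Theorem theorem3p1 (R : realFieldType) (n : nat) (hn : (3 <= n)%N) :
  prob_vec (pi_formula R n) /\ pi_formula R n *m Pmat R n = pi_formula R n /\
  (forall q : 'rV[R]_n, prob_vec q -> q *m Pmat R n = q -> q = pi_formula R n).
Proof.
case: n hn => // n; rewrite ltnS => n_ge2.
set S := \sum_i lucas_row R n 0 i.
have S_gt0 : 0 < S.
  rewrite /S (bigD1 ord0) //= ltr_pwDl ?lucas_row_gt0 //.
  by apply: sumr_ge0 => i _; exact/ltW/lucas_row_gt0.
have piE : pi_formula R n.+1 = S^-1 *: lucas_row R n.
  by apply/rowP => i; rewrite /S sum_lucas_row !mxE mulrC.
have sum_scaled c : \sum_i (c *: lucas_row R n) 0 i = c * S.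
  by under eq_bigr do rewrite mxE; rewrite -mulr_sumr.
split; [split | split].
- by move=> i; rewrite piE mxE mulr_ge0 ?invr_ge0 ?ltW ?lucas_row_gt0.
- by rewrite piE sum_scaled mulVf ?gt_eqF.
- by rewrite piE -scalemxAl (lucas_row_stationary _ _ n_ge2).
move=> q [_ q_sum] /(stationary_Pmat_scaled _ _ n_ge2) q_scaled.
rewrite piE q_scaled; congr (_ *: _).
apply: (mulIf (lt0r_neq0 S_gt0)).
by rewrite /= mulVf ?gt_eqF // -sum_scaled -q_scaled.
Qed.
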